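(* Let $M := \langle X \mid R\rangle$ where $X$ is irredundant, and suppose that $M$ is normalizing, cancellative, and BF. (1) For all $x,y\in X$ there exists $z\in X$ such that $xy =_M zx$. (2) Suppose $X$ is finite and nonempty, $X = \{x_1,\dots,x_n\}$ with $n\in\mathbb{N}^+$. Then for each $a\in\langle X\rangle$ there is a (necessarily unique) word $\nu(a)\in\langle X\rangle$ with $a =_M \nu(a)$, $|a| = |\nu(a)|$, $\nu(a) = x_1^{m_1}\cdots x_n^{m_n}$ with each $m_i\in\mathbb{N}$, and such that $(m_1,\dots,m_n)$ is minimal in the lexicographic order on $\mathbb{N}^n$ among all tuples $(m_1',\dots,m_n')\in\mathbb{N}^n$ with $a =_M x_1^{m_1'}\cdots x_n^{m_n'}$ and $m_1'+\cdots+m_n' = |a|$.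
   Context: For a set $X$, $\langle X\rangle$ is the free monoid on $X$ (identity $1$); $M=\langle X\mid R\rangle$ is the monoid presented by generators $X$ and relations $R\subseteq\langle X\rangle\times\langle X\rangle$. $|a|$ is word length; $a=_M b$ means equal images in $M$. $X$ is irredundant if no proper subset of $X$ generates $M$. $M$ is normalizing if $aM = Ma$ for all $a\in M$; cancellative if $ab=ac$ or $ba=ca$ implies $b=c$. $\mathsf{L}_M(a):=\{|b| : b\in\langle X\rangle,\ b=_M a\}$; $M$ is BF if $\mathsf{L}_M(a)$ is finite for all $a\in\langle X\rangle$. *)

(* Monoid presentations <X | R>: words are [seq X]
   (the free monoid, concatenation ++, identity [::]), and a =_M b is the
   monoid congruence on [seq X] generated by R. *)
From Stdlib Require List.
From mathcomp Require Import all_boot.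
Set Implicit Arguments. Unset Strict Implicit. Unset Printing Implicit Defensive.

Inductive eqM (X : Type) (R : seq X -> seq X -> Prop) : seq X -> seq X -> Prop :=
  | eqM_rel  : forall p u v q, R u v -> eqM R (p ++ u ++ q) (p ++ v ++ q)
  | eqM_refl : forall a, eqM R a a
  | eqM_sym  : forall a b, eqM R a b -> eqM R b a
  | eqM_trans : forall a b c, eqM R a b -> eqM R b c -> eqM R a c.

Definition generates (X : Type) (R : seq X -> seq X -> Prop) (Y : X -> Prop) : Prop :=
  forall a : seq X, exists b : seq X, (forall y, List.In y b -> Y y) /\ eqM R a b.

Definition irredundant (X : Type) (R : seq X -> seq X -> Prop) : Prop :=
  forall Y : X -> Prop, (exists x, ~ Y x) -> ~ generates R Y.

Definition normalizing (X : Type) (R : seq X -> seq X -> Prop) : Prop :=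
  forall a : seq X,
    (forall b, exists c, eqM R (a ++ b) (c ++ a)) /\
    (forall b, exists c, eqM R (b ++ a) (a ++ c)).

Definition cancellative (X : Type) (R : seq X -> seq X -> Prop) : Prop :=
  forall a b c : seq X,
    (eqM R (a ++ b) (a ++ c) -> eqM R b c) /\
    (eqM R (b ++ a) (c ++ a) -> eqM R b c).

Definition lengths (X : Type) (R : seq X -> seq X -> Prop) (a : seq X) : nat -> Prop :=
  fun k => exists b : seq X, eqM R b a /\ size b = k.

(* BF: L_M(a) is finite for all words a (a set of naturals is finite iff bounded) *)
Definition BF (X : Type) (R : seq X -> seq X -> Prop) : Prop :=
  forall a : seq X, exists N : nat, forall k, lengths R a k -> k <= N.

Definition monoword (X : Type) (n : nat) (x : 'I_n -> X) (m : 'I_n -> nat) : seq X :=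
  flatten [seq nseq (m i) (x i) | i <- enum 'I_n].

Definition lex_le (n : nat) (m m' : 'I_n -> nat) : Prop :=
  (forall i, m i = m' i) \/
  exists i : 'I_n, (forall j : 'I_n, (j < i)%N -> m j = m' j) /\ (m i < m' i)%N.

(* Irredundancy forces a generator y to occur in every word equal to it; writing
   such a word as l1 y l2 and normalizing l1 y = y d, cancellation and BF (no
   nonempty word equals 1) show that the word is y itself.  Now x y = c x by
   normality, and splitting c into its first letter and the rest, each moved past
   x by normality, writes y as a product of two words; hence c is a single letter.
   Symmetrically y x = x z, which lets a selection sort bring any word to an equal
   word of the same length with letters in increasing index order, i.e. of the form
   x_1^m_1 ... x_n^m_n. *)

From Stdlib Require Import Classical Wf_nat.
From mathcomp Require Import all_boot zify.

Set Implicit Arguments.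
Unset Strict Implicit.
Unset Printing Implicit Defensive.

Lemma ex_minn_classical (P : nat -> Prop) :
  (exists k, P k) -> exists2 k, P k & forall j, P j -> k <= j.
Proof.
move=> exP; have /dec_inh_nat_subset_has_unique_least_element := exP.
case=> [|k [[Pk kmin] _]]; first by move=> k; apply: classic.
by exists k => // j /kmin/leP.
Qed.

Section LexMin.

Variables (n : nat) (S : ('I_n -> nat) -> Prop).

Definition agree_below k (m m' : 'I_n -> nat) :=
  forall j : 'I_n, j < k -> m j = m' j.

Lemma lex_min_prefix k m0 : k <= n -> S m0 ->
  exists2 m, S m & forall m', S m' -> agree_below k m m' \/
    exists2 i : 'I_n, i < k & agree_below i m m' /\ m i < m' i.
Proof.
elim: k => [|k IH] ltkn Sm0; first by exists m0 => // m' _; left.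
have [m Sm mmin] := IH (ltnW ltkn) Sm0.
pose ik : 'I_n := Ordinal ltkn.
have [v [ms [Sms agree_ms msk]] vmin] := ex_minn_classical
  (ex_intro (fun v => exists m', [/\ S m', agree_below k m' m & m' ik = v])
     _ (ex_intro _ m (And3 Sm (fun _ _ => erefl) erefl))).
exists ms => // m' Sm'.
have [agree_m'|[i ltik [agree_i lt_i]]] := mmin m' Sm'; last first.
  right; exists i; first exact: ltnW.
  split=> [j ltji|]; last by rewrite agree_ms.
  by rewrite agree_ms ?agree_i //; apply: ltn_trans ltik.
have agree_msm' : agree_below k ms m' by move=> j ltjk; rewrite agree_ms ?agree_m'.
have agree_m'm : agree_below k m' m by move=> j ltjk; rewrite agree_m'.
have := vmin (m' ik) (ex_intro _ m' (And3 Sm' agree_m'm erefl)).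
rewrite -msk leq_eqVlt => /orP[/eqP eq_k|lt_k]; last by right; exists ik.
left=> j; rewrite ltnS leq_eqVlt => /orP[/eqP eq_jk|]; last exact: agree_msm'.
by have -> : j = ik by apply: val_inj.
Qed.

Lemma lex_min m0 : S m0 -> exists2 m, S m & forall m', S m' -> lex_le m m'.
Proof.
move=> /(lex_min_prefix (leqnn n))[m Sm mmin]; exists m => // m' /mmin[agree|].
  by left=> j; apply: agree.
by case=> i _ lex_i; right; exists i.
Qed.

End LexMin.

Section CountBlocks.

Variables (T : eqType) (leT : rel T).
Hypotheses (leT_refl : reflexive leT) (leT_tr : transitive leT)
  (leT_anti : antisymmetric leT).

Lemma sorted_flatten_nseq (c : T -> nat) (e : seq T) :
  sorted leT e -> sorted leT (flatten [seq nseq (c y) y | y <- e]).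
Proof.
rewrite !(sorted_pairwise leT_tr); elim: e => [//|y e IH] /= /andP[y_le_e /IH].
rewrite pairwise_cat => ->; rewrite andbT; apply/andP; split.
  apply/allrelP => z t; rewrite mem_nseq => /andP[_ /eqP->].
  case/flattenP=> _ /mapP[u u_e ->]; rewrite mem_nseq => /andP[_ /eqP->].
  exact: (allP y_le_e).
elim: (c y) => //= k ->; rewrite andbT.
by apply/allP=> z; rewrite mem_nseq => /andP[_ /eqP->].
Qed.

Lemma perm_count_blocks (e s : seq T) : uniq e -> {subset s <= e} ->
  perm_eq (flatten [seq nseq (count_mem y s) y | y <- e]) s.
Proof.
move=> uniq_e s_e; apply: perm_trans (perm_count_undup s).
have -> : flatten [seq nseq (count_mem y s) y | y <- e] =
          flatten [seq nseq (count_mem y s) y | y <- [seq y <- e | y \in s]].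
  elim: e {uniq_e s_e} => //= y e IH; rewrite IH.
  by case: ifP => //= /negbT/count_memPn->.
apply/perm_flatten/perm_map/uniq_perm; rewrite ?filter_uniq ?undup_uniq // => y.
by rewrite mem_filter mem_undup andb_idr // => /s_e.
Qed.

Lemma sorted_count_blocks (e s : seq T) :
  uniq e -> sorted leT e -> {subset s <= e} -> sorted leT s ->
  s = flatten [seq nseq (count_mem y s) y | y <- e].
Proof.
move=> uniq_e sorted_e s_e sorted_s; apply: (sorted_eq leT_tr leT_anti) => //.
  exact: sorted_flatten_nseq.
by rewrite perm_sym perm_count_blocks.
Qed.

End CountBlocks.

Lemma mem_map_split (A : Type) (f : A -> nat) (w : seq A) k :
  k \in map f w -> exists p y q, w = p ++ y :: q /\ f y = k.
Proof.
elim: w => [//|z w IH]; rewrite /= inE => /orP[/eqP->|/IH[p [y [q [-> fy]]]]].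
  by exists [::], z, w.
by exists (z :: p), y, q.
Qed.

Section Presentation.

Variables (X : Type) (R : seq X -> seq X -> Prop).

Lemma eqM_cat a b c d : eqM R a b -> eqM R c d -> eqM R (a ++ c) (b ++ d).
Proof.
have eqM_ctx p q u v : eqM R u v -> eqM R (p ++ u ++ q) (p ++ v ++ q).
  elim=> [p' u' v' q' Ruv|w|w w' _|w w' w'' _ IH1 _ IH2].
  - by have := eqM_rel (p ++ p') (q' ++ q) Ruv; rewrite -!catA.
  - exact: eqM_refl.
  - exact: eqM_sym.
  - exact: eqM_trans IH2.
move=> eq_ab eq_cd; apply: (@eqM_trans _ _ _ (b ++ c)).
  by have := eqM_ctx [::] c _ _ eq_ab.
by have := eqM_ctx b [::] _ _ eq_cd; rewrite !cats0.
Qed.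

Section SelectionSort.

Hypothesis move_left : forall x y : X, exists z, eqM R [:: y; x] [:: x; z].
Variable key : X -> nat.

Lemma eqM_move_front (u : seq X) (y : X) :
  exists2 u', size u' = size u & eqM R (u ++ [:: y]) (y :: u').
Proof.
elim: u => [|z u [u' size_u' eq_u']]; first by exists [::]; last exact: eqM_refl.
have [t eq_zy] := move_left y z.
exists (t :: u'); first by rewrite /= size_u'.
apply: (@eqM_trans _ _ _ ([:: z; y] ++ u')).
  exact: (eqM_cat (eqM_refl R [:: z]) eq_u').
exact: (eqM_cat eq_zy (eqM_refl R u')).
Qed.

(* Selection sort: bring to the front a letter of least key among all words
   equal to [a] of the same length, then sort the rest; by minimality no letter
   of the rest has a smaller key. *)
Lemma eqM_sorted_word (a : seq X) :
  exists w, [/\ eqM R a w, size w = size a & sorted leq (map key w)].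
Proof.
have [N] := ubnP (size a); elim: N a => // N IH a.
case: a => [|y0 a0] size_a; first by exists [::]; split=> //; apply: eqM_refl.
pose P k := exists w, [/\ eqM R (y0 :: a0) w, size w = (size a0).+1 & k \in map key w].
have [k [w [eq_w size_w kw]] kmin] : exists2 k, P k & forall j, P j -> k <= j.
  apply: ex_minn_classical; exists (key y0), (y0 :: a0).
  by rewrite inE eqxx; split=> //; apply: eqM_refl.
have [p [y [q [w_def key_y]]]] := mem_map_split kw; subst w.
have [p' size_p' eq_p'] := eqM_move_front p y.
have [|s [eq_s size_s sorted_s]] := IH (p' ++ q).
  by move: size_a size_w; rewrite /= !size_cat /= size_p'; lia.
have eq_ys : eqM R (y0 :: a0) (y :: s).
  apply: (eqM_trans eq_w).
  have -> : p ++ y :: q = (p ++ [:: y]) ++ q by rewrite -catA.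
  exact: eqM_trans (eqM_cat eq_p' (eqM_refl R q)) (eqM_cat (eqM_refl R [:: y]) eq_s).
have size_ys : size (y :: s) = size (y0 :: a0).
  by move: size_w; rewrite /= size_s !size_cat size_p' /=; lia.
exists (y :: s); split=> //=; rewrite (path_sortedE leq_trans) sorted_s andbT.
by apply/allP=> j js; rewrite key_y; apply: kmin; exists (y :: s); rewrite inE js orbT.
Qed.

End SelectionSort.

Hypotheses (irredR : irredundant R) (normR : normalizing R)
  (cancR : cancellative R) (bfR : BF R).

(* A nonempty word equal to 1 would have arbitrarily long powers equal to 1. *)
Lemma eqM_nil w : eqM R w [::] -> w = [::].
Proof.
case: w => [//|y w] eq_w1; have [N lenN] := bfR [::].
have pow k : eqM R (flatten (nseq k (y :: w))) [::] /\
             k <= size (flatten (nseq k (y :: w))).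
  elim: k => [|k [eq_k len_k]]; first by split=> //; apply: eqM_refl.
  by split; [apply: (eqM_cat eq_w1 eq_k) | rewrite /= size_cat /=; lia].
have [eq_N len_N] := pow N.+1.
by have := lenN _ (ex_intro _ _ (conj eq_N erefl)); lia.
Qed.

Lemma eqM_suffix_nil a b : eqM R (a ++ b) a -> b = [::].
Proof.
by rewrite -{2}[a]cats0 => /(cancR a b [::]).1/eqM_nil.
Qed.

Lemma eqM_prefix_nil a b : eqM R (b ++ a) a -> b = [::].
Proof.
by rewrite -{2}[a]cat0s => /(cancR a b [::]).2/eqM_nil.
Qed.

(* Otherwise replacing [x] by [w] everywhere shows that X \ {x} generates M. *)
Lemma eqM_letter_in x w : eqM R [:: x] w -> List.In x w.
Proof.
move=> eq_xw; apply: NNPP => x_w.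
apply: (irredR (Y := fun y => y <> x)) => [|a]; first by exists x.
elim: a => [|y a [b [b_Y eq_ab]]]; first by exists [::]; split=> //; apply: eqM_refl.
have [->|yx] := classic (y = x).
  exists (w ++ b); split; last exact: (eqM_cat eq_xw eq_ab).
  by move=> z /(List.in_app_or w b z)[z_w zx|/b_Y//]; apply: x_w; rewrite -zx.
exists (y :: b); split; first by move=> z /= [<-|/b_Y].
exact: (eqM_cat (eqM_refl R [:: y]) eq_ab).
Qed.

Lemma eqM_letter y w : eqM R [:: y] w -> w = [:: y].
Proof.
move=> eq_yw; have [l1 [l2 w_def]] : exists l1 l2, w = l1 ++ y :: l2.
  exact: List.in_split (eqM_letter_in eq_yw).
have [d eq_d] := (normR [:: y]).2 l1.
have /(cancR [:: y] _ _).1/eqM_sym/eqM_nil : eqM R ([:: y] ++ [::]) ([:: y] ++ d ++ l2).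
  apply: (eqM_trans eq_yw); rewrite w_def catA.
  have -> : l1 ++ y :: l2 = (l1 ++ [:: y]) ++ l2 by rewrite -catA.
  exact: (eqM_cat eq_d (eqM_refl R l2)).
case: d eq_d => [|//] /eqM_prefix_nil l1_nil /= l2_nil.
by rewrite w_def l1_nil l2_nil.
Qed.

Lemma letter_move_right x y : exists z, eqM R [:: x; y] [:: z; x].
Proof.
have [[|c1 c] eq_c] := (normR [:: x]).1 [:: y].
  by move/eqM_suffix_nil: eq_c.
have [d1 eq_d1] := (normR [:: x]).2 [:: c1].
have [d2 eq_d2] := (normR [:: x]).2 c.
have : eqM R ([:: x] ++ [:: y]) ([:: x] ++ d1 ++ d2).
  apply: (eqM_trans eq_c); rewrite catA.
  apply: (@eqM_trans _ _ _ ([:: c1] ++ [:: x] ++ d2)).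
    exact: (eqM_cat (eqM_refl R [:: c1]) eq_d2).
  by rewrite catA; apply: (eqM_cat eq_d1 (eqM_refl R d2)).
move/(cancR _ _ _).1/eqM_letter.
case: d1 eq_d1 => [/eqM_prefix_nil//|t [|//]] _ [_ d2_nil].
by move: eq_d2 eq_c; rewrite d2_nil => /eqM_prefix_nil->; exists c1.
Qed.

Lemma letter_move_left x y : exists z, eqM R [:: y; x] [:: x; z].
Proof.
have [[|c1 c] eq_c] := (normR [:: x]).2 [:: y].
  by move/eqM_prefix_nil: eq_c.
have [d1 eq_d1] := (normR [:: x]).1 [:: c1].
have [d2 eq_d2] := (normR [:: x]).1 c.
have : eqM R ([:: y] ++ [:: x]) ((d1 ++ d2) ++ [:: x]).
  apply: (eqM_trans eq_c).
  apply: (@eqM_trans _ _ _ ((d1 ++ [:: x]) ++ c)).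
    exact: (eqM_cat eq_d1 (eqM_refl R c)).
  by rewrite -!catA; apply: (eqM_cat (eqM_refl R d1) eq_d2).
move/(cancR _ _ _).2/eqM_letter.
case: d1 eq_d1 => [/eqM_suffix_nil//|t [|//]] _ [_ d2_nil].
by move: eq_d2 eq_c; rewrite d2_nil => /eqM_suffix_nil->; exists c1.
Qed.

End Presentation.

Section Monoword.

Variables (X : Type) (n : nat) (x : 'I_n -> X).

Lemma monoword_map m :
  monoword x m = map x (flatten [seq nseq (m i) i | i <- enum 'I_n]).
Proof.
rewrite /monoword map_flatten -map_comp.
by congr flatten; apply: eq_map => i /=; rewrite map_nseq.
Qed.

Lemma size_monoword m : size (monoword x m) = \sum_(i < n) m i.
Proof.
rewrite /monoword size_flatten /shape -map_comp sumnE big_map big_enum /=.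
by apply: eq_bigr => i _; rewrite size_nseq.
Qed.

Lemma sorted_monoword (g : X -> 'I_n) (w : seq X) : cancel g x ->
  sorted leq [seq val (g y) | y <- w] ->
  w = monoword x (fun i => count_mem i (map g w)).
Proof.
move=> gK sorted_w; rewrite monoword_map -(@sorted_count_blocks _ (relpre val leq)).
- by elim: w {sorted_w} => //= y w <-; rewrite gK.
- exact: (fun i => leqnn (val i)).
- exact: (fun j i k => @leq_trans (val j) (val i) (val k)).
- by move=> i j /anti_leq/val_inj.
- exact: enum_uniq.
- by rewrite -sorted_map val_enum_ord iota_sorted.
- by move=> i; rewrite mem_enum.
- by rewrite -sorted_map -map_comp.
Qed.

End Monoword.

Theorem lemma5p3 (X : Type) (R : seq X -> seq X -> Prop) :
  irredundant R -> normalizing R -> cancellative R -> BF R ->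
  (forall x y : X, exists z : X, eqM R [:: x; y] [:: z; x]) /\
  (forall (n : nat) (x : 'I_n -> X), (0 < n)%N -> bijective x ->
     forall a : seq X, exists nu : seq X,
       eqM R a nu /\ size a = size nu /\
       exists m : 'I_n -> nat, nu = monoword x m /\
         forall m' : 'I_n -> nat,
           eqM R a (monoword x m') -> \sum_(i < n) m' i = size a -> lex_le m m').
Proof.
move=> irredR normR cancR bfR; split; first exact: letter_move_right.
move=> n x _ [g _ gK] a.
have [w [eq_aw size_w sorted_w]] :=
  eqM_sorted_word (letter_move_left irredR normR cancR bfR) (fun y => val (g y)) a.
pose S m := eqM R a (monoword x m) /\ \sum_(i < n) m i = size a.
have w_def := sorted_monoword gK sorted_w.
have S_w : S (fun i => count_mem i (map g w)).
  by split; rewrite -?w_def // -size_w {2}w_def size_monoword.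
have [m [eq_m sum_m] m_min] := lex_min S_w.
exists (monoword x m); split=> //; split; first by rewrite size_monoword sum_m.
by exists m; split=> // m' eq_m' sum_m'; apply: m_min.
Qed.
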